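(* Let $\mathbb{B}$ be a complete Boolean algebra, $A$ a maximal antichain in $\mathbb{B}$, and $S\subseteq\mathcal{P}(A)$ a family independent modulo $\{A\}$, i.e. for distinct $X_1,\dots,X_m,Y_1,\dots,Y_n\in S$ one has $(A\setminus X_1)\cup\dots\cup(A\setminus X_m)\cup Y_1\cup\dots\cup Y_n\neq A$. Write $\{\bigvee X: X\in S\}=S_0\cup S'$ with $S_0\cap S'=\emptyset$, and let $U_0$ be the filter on $\mathbb{B}$ generated by $S'\cup\{\neg\bigwedge I: I\subseteq S'\text{ infinite}\}$. Then $S_0$ is independent modulo $U_0$; in particular $U_0$ is a proper filter.
   Context: For a filter $F$ on a Boolean algebra $\mathbb{B}$, a set $T\subseteq\mathbb{B}$ is independent modulo $F$ if whenever $s_1,\dots,s_m,t_1,\dots,t_n\in T$ are distinct, $\neg s_1\vee\dots\vee\neg s_m\vee t_1\vee\dots\vee t_n\notin F$. *)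

(* Boolean algebras are MathComp's complemented distributive
   lattices with top and bottom (ctbDistrLatticeType). *)
From mathcomp Require Import all_boot all_order.
From Stdlib Require List.
Set Implicit Arguments. Unset Strict Implicit. Unset Printing Implicit Defensive.
Import Order.TTheory.
Local Open Scope order_scope.

Section BA.
Context {d : Order.disp_t} {B : ctbDistrLatticeType d}.

Definition is_sup (X : B -> Prop) (s : B) : Prop :=
  (forall x, X x -> x <= s) /\ (forall u, (forall x, X x -> x <= u) -> s <= u).

Definition is_inf (X : B -> Prop) (s : B) : Prop :=
  (forall x, X x -> s <= x) /\ (forall u, (forall x, X x -> u <= x) -> u <= s).

Definition complete_BA : Prop := forall X : B -> Prop, exists s, is_sup X s.

Definition antichain (A : B -> Prop) : Prop :=
  (forall a, A a -> a != \bot) /\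
  (forall a b, A a -> A b -> a != b -> a `&` b = \bot).

Definition maximal_antichain (A : B -> Prop) : Prop :=
  antichain A /\
  (forall A' : B -> Prop, antichain A' -> (forall a, A a -> A' a) ->
     forall a, A' a -> A a).

Definition is_filter (F : B -> Prop) : Prop :=
  F \top /\
  (forall x y, F x -> x <= y -> F y) /\
  (forall x y, F x -> F y -> F (x `&` y)).

Definition gen_filter (G : B -> Prop) (b : B) : Prop :=
  forall F, is_filter F -> (forall x, G x -> F x) -> F b.

Definition proper_filter (F : B -> Prop) : Prop := is_filter F /\ ~ F \bot.

Definition independent_mod (F : B -> Prop) (T : B -> Prop) : Prop :=
  forall ss ts : seq B,
    (forall s, s \in ss -> T s) -> (forall t, t \in ts -> T t) ->
    uniq (ss ++ ts) ->
    ~ F ((\join_(s <- ss) ~` s) `|` (\join_(t <- ts) t)).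

End BA.

Definition independent_mod_top {T : Type} (A : T -> Prop)
    (S : (T -> Prop) -> Prop) : Prop :=
  forall Xs Ys : list (T -> Prop),
    (forall X, List.In X Xs -> S X) -> (forall Y, List.In Y Ys -> S Y) ->
    List.NoDup (Xs ++ Ys) ->
    ~ (forall a, A a <->
         ((exists X, List.In X Xs /\ A a /\ ~ X a) \/ (exists Y, List.In Y Ys /\ Y a))).

Definition infinite_set {T : Type} (I : T -> Prop) : Prop :=
  ~ exists l : list T, forall x, I x -> List.In x l.

From mathcomp Require Import all_boot all_order.
From Stdlib Require List.
From Stdlib Require Import Classical ClassicalEpsilon.
Import Order.Theory.
Set Implicit Arguments. Unset Strict Implicit. Unset Printing Implicit Defensive.
Local Open Scope order_scope.

(* Every element b of S0 or S' is the supremum of a set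
   X_b ∈ S of atoms of the maximal antichain A, and an atom a ∈ A lies below
   b iff a ∈ X_b; otherwise b <= ~a.  Instead of working with the generated
   filter U0 directly we bound it by an explicit "atom filter": b belongs to
   it when, for some finitely many y_1..y_k ∈ S' and finitely many infinite
   I_1..I_l ⊆ S', every atom below all y_i and not below some element of each
   I_j lies below b.  This set is a filter containing the generators of U0,
   so it contains U0.  To show that S0 is independent modulo the atom filter,
   pick in each I_j a fresh element w_j; independence of S modulo {A}
   yields an atom a below all s_i and all y_i and below none of the t_i and
   w_j.  Then a lies below the join  ~s_1 ∨ .. ∨ t_1 ∨ ..  (by the defining
   property of the atom filter), while that join is below ~a: contradiction.
   Properness of U0 is the case of the empty join. *)

Lemma InP (T : eqType) (x : T) (l : seq T) : reflect (List.In x l) (x \in l).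
Proof.
elim: l => [|y l IH] /=; first by constructor.
rewrite inE; apply: (iffP orP) => [[/eqP ->|/IH]|[->|/IH]]; by [left|right|rewrite eqxx|].
Qed.

Lemma NoDup_map_inj (T : eqType) (U : Type) (f : T -> U) (l : seq T) :
  uniq l -> {in l &, injective f} -> List.NoDup (map f l).
Proof.
elim: l => [|x l IH] /=; first by constructor.
move=> /andP[xl ul] inj; constructor.
- move=> /List.in_map_iff [y [fy /InP yl]].
  have eyx : y = x by apply: inj; rewrite ?inE ?yl ?eqxx ?orbT.
  by move: xl; rewrite -eyx yl.
- by apply: IH => // u v uin vin; apply: inj; rewrite inE ?uin ?vin ?orbT.
Qed.

Lemma pick_fresh (T : eqType) (P : T -> Prop) (Il : list (T -> Prop)) (l0 : seq T) :
  (forall I, List.In I Il -> (forall x, I x -> P x) /\ infinite_set I) ->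
  exists ws : seq T, [/\ uniq ws, forall w, w \in ws -> w \notin l0 /\ P w &
    forall I, List.In I Il -> exists2 w, w \in ws & I w].
Proof.
elim: Il => [|I Il IH] H; first by exists [::].
have [ws [uws hws hI]] := IH (fun J hJ => H J (or_intror hJ)).
have [IP Iinf] := H I (or_introl erefl).
have [x Ix /InP nx] : exists2 x, I x & ~ List.In x (l0 ++ ws).
{ apply: NNPP => hn; apply: Iinf; exists (l0 ++ ws) => x Ix.
  by apply: NNPP => nx; apply: hn; exists x. }
rewrite mem_cat negb_or in nx; case/andP: nx => xl0 xws.
exists (x :: ws); split; first by rewrite /= xws.
- by move=> w; rewrite inE => /orP [/eqP ->|/hws //]; split; last exact: IP.
- move=> J [<-|/hI [w ww Jw]]; first by exists x; rewrite ?inE ?eqxx.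
  by exists w; rewrite ?inE ?ww ?orbT.
Qed.

Section AtomsBelowSuprema.
Context {d : Order.disp_t} {B : ctbDistrLatticeType d}.

Lemma sup_unique (X : B -> Prop) (s t : B) : is_sup X s -> is_sup X t -> s = t.
Proof. by move=> [Xs sl] [Xt tl]; apply/le_anti/andP; split; [apply: sl | apply: tl]. Qed.

Variable A : B -> Prop.
Hypothesis HA : antichain A.

Lemma atom_not_le_compl (a : B) : A a -> ~ a <= ~` a.
Proof. by move=> Aa; rewrite -disj_leC meetxx; apply/negP; exact: (proj1 HA). Qed.

Lemma sup_le_compl (X : B -> Prop) (s a : B) :
  (forall x, X x -> A x) -> A a -> ~ X a -> is_sup X s -> s <= ~` a.
Proof.
move=> XA Aa nXa [_ sl]; apply: sl => x Xx.
rewrite -disj_leC; apply/eqP; apply: (proj2 HA) => //; first exact: XA.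
by apply/eqP => exa; apply: nXa; rewrite -exa.
Qed.

Lemma le_sup_iff (X : B -> Prop) (s a : B) :
  (forall x, X x -> A x) -> A a -> is_sup X s -> a <= s <-> X a.
Proof.
move=> XA Aa hs; split => [as_ | Xa]; last exact: (proj1 hs).
apply: NNPP => nXa; apply: (atom_not_le_compl Aa).
exact: le_trans as_ (sup_le_compl XA Aa nXa hs).
Qed.

Lemma not_le_sup_le_compl (X : B -> Prop) (s a : B) :
  (forall x, X x -> A x) -> A a -> is_sup X s -> ~ a <= s -> s <= ~` a.
Proof.
move=> XA Aa hs nas.
have nXa : ~ X a by move=> /(le_sup_iff XA Aa hs).
exact: sup_le_compl XA Aa nXa hs.
Qed.

End AtomsBelowSuprema.

Section Representatives.
Context {d : Order.disp_t} {B : ctbDistrLatticeType d}.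
Variable S : (B -> Prop) -> Prop.

Definition represented (b : B) : Prop := exists X, S X /\ is_sup X b.

Definition rep_set (b : B) : B -> Prop :=
  epsilon (inhabits (fun _ => False)) (fun X => S X /\ is_sup X b).

Lemma rep_setP (b : B) : represented b -> S (rep_set b) /\ is_sup (rep_set b) b.
Proof. exact: epsilon_spec. Qed.

Lemma rep_set_NoDup (l : seq B) :
  (forall x, x \in l -> represented x) -> uniq l -> List.NoDup (map rep_set l).
Proof.
move=> rep ul; apply: NoDup_map_inj => // u v /rep/rep_setP [_ hu] /rep/rep_setP [_ hv] e.
by rewrite e in hu; exact: sup_unique hu hv.
Qed.

Variable A : B -> Prop.
Hypothesis HA : antichain A.
Hypothesis HSA : forall X, S X -> forall a, X a -> A a.
Hypothesis HS : independent_mod_top A S.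

(* Independence of S modulo {A}, read on suprema: for distinct represented
   x_1..x_m, z_1..z_n some atom lies below every x_i and below no z_j. *)
Lemma independent_atom (L1 L2 : seq B) :
  (forall x, x \in L1 ++ L2 -> represented x) -> uniq (L1 ++ L2) ->
  exists a, [/\ A a, forall x, x \in L1 -> a <= x & forall x, x \in L2 -> ~ a <= x].
Proof.
move=> rep U.
have rep1 x : x \in L1 -> represented x by move=> xL; apply: rep; rewrite mem_cat xL.
have rep2 x : x \in L2 -> represented x by move=> xL; apply: rep; rewrite mem_cat xL orbT.
have inS L : (forall x, x \in L -> represented x) ->
    forall X, List.In X (map rep_set L) -> S X.
{ by move=> repL X /List.in_map_iff [y [<- /InP /repL /rep_setP []]]. }
have ND : List.NoDup (map rep_set L1 ++ map rep_set L2).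
{ by rewrite -map_cat; apply: rep_set_NoDup. }
have [a ha] := not_all_ex_not _ _ (HS (inS _ rep1) (inS _ rep2) ND).
have Aa : A a.
{ apply: NNPP => nA; apply: ha; split => // [][[X [_ [] //]]|[Y [iY Ya]]].
  by case: nA; exact: HSA (inS _ rep2 _ iY) _ Ya. }
have sup x (xL : represented x) := proj2 (rep_setP xL).
have subA x (xL : represented x) := HSA (proj1 (rep_setP xL)).
exists a; split => // x xL.
- apply/(le_sup_iff HA (subA _ (rep1 _ xL)) Aa (sup _ (rep1 _ xL))).
  apply: NNPP => nx; apply: ha; split => // _; left; exists (rep_set x).
  by split => //; apply/List.in_map_iff; exists x; split => //; apply/InP.
- move/(le_sup_iff HA (subA _ (rep2 _ xL)) Aa (sup _ (rep2 _ xL))) => xa.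
  apply: ha; split => // _; right; exists (rep_set x); split => //.
  by apply/List.in_map_iff; exists x; split => //; apply/InP.
Qed.

End Representatives.

Section AtomFilter.
Context {d : Order.disp_t} {B : ctbDistrLatticeType d}.
Variables (A P : B -> Prop).

Definition atom_filter (b : B) : Prop :=
  exists (yl : seq B) (Il : list (B -> Prop)),
  [/\ forall y, y \in yl -> P y,
      forall I, List.In I Il -> (forall x, I x -> P x) /\ infinite_set I &
      forall a, A a -> (forall y, y \in yl -> a <= y) ->
        (forall I, List.In I Il -> exists2 x, I x & ~ a <= x) -> a <= b].

(* Conjunction is handled by concatenating the finite data. *)
Lemma atom_filter_is_filter : is_filter atom_filter.
Proof.
split; [|split].
- by exists [::], [::]; split => // *; exact: lex1.
- move=> x y [yl [Il [yP IP le_x]]] xy; exists yl, Il; split => // a Aa ya Ia.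
  exact: le_trans (le_x a Aa ya Ia) xy.
- move=> x y [yl [Il [yP IP le_x]]] [yl' [Il' [yP' IP' le_y]]].
  exists (yl ++ yl'), (Il ++ Il'); split.
  + by move=> z; rewrite mem_cat => /orP [/yP|/yP'].
  + by move=> I /List.in_app_iff [/IP|/IP'].
  + move=> a Aa ya Ia; rewrite lexI le_x ?le_y // => [z zl|I Il0|z zl|I Il0].
    all: by [apply: ya; rewrite mem_cat zl ?orbT | apply: Ia; apply/List.in_app_iff; auto].
Qed.

(* The generators of U0 over P: the elements of P and the complements of
   meets of infinite subsets of P. *)
Definition meet_compl_generators (b : B) : Prop :=
  P b \/ exists I : B -> Prop,
    (forall x, I x -> P x) /\ infinite_set I /\ exists m, is_inf I m /\ b = ~` m.

Hypothesis HA : antichain A.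
Hypothesis HPA : forall y, P y -> exists2 X, (forall x, X x -> A x) & is_sup X y.

(* When P consists of suprema of atoms, the atom filter contains these
   generators: an atom not below some x ∈ I is disjoint from x ≥ ⋀I. *)
Lemma generators_in_atom_filter (b : B) : meet_compl_generators b -> atom_filter b.
Proof.
case=> [Pb | [I [IP [Iinf [m [mI ->]]]]]].
- exists [:: b], [::]; split => // [y|a _ ya _]; first by rewrite inE => /eqP ->.
  by apply: ya; rewrite inE.
- exists [::], [:: I]; split => // [J [<-|] //|a Aa _ Ia].
  have [x Ix nax] := Ia I (or_introl erefl).
  have [X XA supX] := HPA (IP x Ix).
  rewrite lexC; apply: le_trans (proj1 mI x Ix) _.
  exact: (not_le_sup_le_compl HA XA Aa supX nax).
Qed.

Lemma gen_filter_le_atom_filter (b : B) : gen_filter meet_compl_generators b -> atom_filter b.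
Proof. by apply; [exact: atom_filter_is_filter | exact: generators_in_atom_filter]. Qed.

End AtomFilter.

Lemma gen_filter_filter {d : Order.disp_t} {B : ctbDistrLatticeType d} (G : B -> Prop) :
  is_filter (gen_filter G).
Proof.
split; [|split].
- by move=> F [] .
- by move=> x y Gx xy F hF FG; apply: (proj1 (proj2 hF)) xy; exact: Gx.
- by move=> x y Gx Gy F hF FG; apply: (proj2 (proj2 hF)); [exact: Gx | exact: Gy].
Qed.

Section IndependenceModuloAtomFilter.
Context {d : Order.disp_t} {B : ctbDistrLatticeType d}.
Variables (A : B -> Prop) (S : (B -> Prop) -> Prop) (S0 S' : B -> Prop).
Hypothesis HA : antichain A.
Hypothesis HSA : forall X, S X -> forall a, X a -> A a.
Hypothesis HS : independent_mod_top A S.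
Hypothesis Hsplit : forall b, represented S b <-> S0 b \/ S' b.
Hypothesis Hdisj : forall b, ~ (S0 b /\ S' b).

Lemma S'_sup_of_atoms (y : B) : S' y -> exists2 X, (forall x, X x -> A x) & is_sup X y.
Proof. by move=> /(@or_intror (S0 y)) /Hsplit [X [SX supX]]; exists X => //; exact: HSA. Qed.

(* The finitely many y_i ∈ S' join the s's and fresh witnesses w_j ∈ I_j
   join the t's; an atom given by independent_atom then lies both below and
   disjoint from the join in question. *)
Lemma S0_independent_mod_atom_filter : independent_mod (atom_filter A S') S0.
Proof.
move=> ss ts ss0 ts0 U [yl [Il [yS' IS' le_join]]].
have [ws [uws wfresh Iw]] := pick_fresh (ss ++ ts ++ yl) IS'.
set L1 := ss ++ undup yl; set L2 := ts ++ ws.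
have repL x : x \in L1 ++ L2 -> represented S x.
{ move=> xL; apply/Hsplit; move: xL; rewrite !mem_cat mem_undup -!orbA.
  by case/or4P => [/ss0|/yS'|/ts0|/wfresh[]]; auto. }
have U12 : uniq (L1 ++ L2).
{ rewrite (perm_uniq (introT permPl (perm_catACA ss (undup yl) ts ws))) cat_uniq U.
  rewrite cat_uniq undup_uniq uws /= andbT; apply/andP; split.
  - apply/hasPn => x; rewrite mem_cat mem_undup => /orP [/yS' x'|xw].
    + apply/negP; rewrite mem_cat => /orP [/ss0|/ts0] x0; exact: Hdisj (conj x0 x').
    + by have [+ _] := wfresh x xw; rewrite catA mem_cat negb_or => /andP[].
  - apply/hasPn => x /wfresh [+ _]; rewrite mem_undup !mem_cat.
    by rewrite !negb_or => /and3P[]. }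
have [a [Aa aL1 aL2]] := independent_atom HA HSA HS repL U12.
have a_le_join : a <= (\join_(s <- ss) ~` s) `|` (\join_(t <- ts) t).
{ apply: le_join => // [y yl0 | I II].
  - by apply: aL1; rewrite mem_cat mem_undup yl0 orbT.
  - have [w ww Iw'] := Iw I II; exists w => //.
    by apply: aL2; rewrite mem_cat ww orbT. }
have join_le_compl : (\join_(s <- ss) ~` s) `|` (\join_(t <- ts) t) <= ~` a.
{ rewrite leUx; apply/andP; split; apply/joinsP_seq => x xin _.
  - by rewrite leC; apply: aL1; rewrite mem_cat xin.
  - have xL2 : x \in L2 by rewrite mem_cat xin.
    have xL : x \in L1 ++ L2 by rewrite mem_cat xL2 orbT.
    have [X [SX supX]] := repL x xL.
    exact: (not_le_sup_le_compl HA (HSA SX) Aa supX (aL2 x xL2)). }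
exact: (atom_not_le_compl HA Aa (le_trans a_le_join join_le_compl)).
Qed.

End IndependenceModuloAtomFilter.

Theorem mainTheorem3 (d : Order.disp_t) (B : ctbDistrLatticeType d)
  (HB : @complete_BA d B)
  (A : B -> Prop) (HA : maximal_antichain A)
  (S : (B -> Prop) -> Prop)
  (HSA : forall X, S X -> forall a, X a -> A a)
  (HS : independent_mod_top A S)
  (S0 S' : B -> Prop)
  (Hsplit : forall b, (exists X, S X /\ is_sup X b) <-> (S0 b \/ S' b))
  (Hdisj : forall b, ~ (S0 b /\ S' b)) :
  let U0 := gen_filter (fun b => S' b \/
              exists I : B -> Prop,
                (forall x, I x -> S' x) /\ infinite_set I /\
                exists m, is_inf I m /\ b = ~` m) in
  independent_mod U0 S0 /\ proper_filter U0.
Proof.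
move=> U0.
have antiA : antichain A := proj1 HA.
have U0_atom b : U0 b -> atom_filter A S' b.
{ exact/gen_filter_le_atom_filter/(S'_sup_of_atoms HSA Hsplit). }
have indep := S0_independent_mod_atom_filter antiA HSA HS Hsplit Hdisj.
split; first by move=> ss ts ss0 ts0 U /U0_atom; exact: indep.
split; first exact: gen_filter_filter.
move=> /U0_atom bot_in; apply: (indep [::] [::]) => //.
by rewrite !big_nil joinxx.
Qed.
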